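(* Let $k\geq3$ and let $H$ be a closed subgroup of $\mathrm{GL}_k(\mathbb{R})$ with $\mathrm{SO}(k)\subset H$, such that $H$ preserves, under the action by conjugation, some linear subspace $E\subset\mathrm{End}(\mathbb{R}^k)$ of dimension $d$ with $1<d<k^2-1$. Then $H$ is contained in the conformal group $\mathrm{CO}(k)=\mathbb{R}^*\,\mathrm{SO}(k)$. *)

From HB Require Import structures.
From mathcomp Require Import all_boot all_order all_algebra.
From mathcomp Require Import all_classical all_reals topology normedtype matrix_topology.
Set Implicit Arguments. Unset Strict Implicit. Unset Printing Implicit Defensive.
Import Order.TTheory GRing.Theory Num.Theory numFieldNormedType.Exports.
Local Open Scope ring_scope.
Local Open Scope classical_set_scope.

Definition SOmx (R : realType) (k : nat) : set 'M[R]_k :=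
  [set A | A *m A^T = 1%:M /\ \det A = 1].

Definition COmx (R : realType) (k : nat) : set 'M[R]_k :=
  [set A | exists2 c : R, 0 < c & A *m A^T = c%:M].

Definition is_GL_subgroup (R : realType) (k : nat) (H : set 'M[R]_k) : Prop :=
  [/\ H 1%:M,
      (forall A, H A -> A \in unitmx),
      (forall A B, H A -> H B -> H (A *m B)) &
      (forall A, H A -> H (invmx A))].

Definition closed_in_GL (R : realType) (k : nat) (H : set 'M[R]_k) : Prop :=
  forall A, closure H A -> A \in unitmx -> H A.

Definition conj_preserves (R : realType) (k : nat) (H : set 'M[R]_k)
  (E : {vspace 'M[R]_k}) : Prop :=
  forall h A, H h -> A \in E -> h *m A *m invmx h \in E.

(* The matrices X with [X, E] included in E form a Lie algebra L(E), stable
   under conjugation by H.  Differences of conjugates of E by plane rotations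
   put every generator e_ji - e_ij of so(k) into L(E), hence h J h^-1 lies in
   L(E) for every h in H.  If all these conjugates are skew-symmetric, then
   h^T h commutes with so(k), so for k >= 3 it is a positive scalar and h is
   conformal.  Otherwise L(E) contains a traceless non-skew matrix; averaging
   it with its conjugate by a half-turn and bracketing with so(k) yields a
   matrix unit e_pq in L(E), hence (k >= 3) every off-diagonal matrix unit,
   i.e. sl(k) is contained in L(E).  A subspace stable under ad sl(k) that
   contains a non-scalar matrix contains sl(k), so dim E <= 1 or
   dim E >= k^2 - 1. *)

From HB Require Import structures.
From mathcomp Require Import all_boot all_order all_algebra.
From mathcomp Require Import all_classical all_reals topology normedtype matrix_topology.
From mathcomp Require Import ring lra zify.
Import Order.TTheory GRing.Theory Num.Theory numFieldNormedType.Exports.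
Local Open Scope ring_scope.
Local Open Scope classical_set_scope.
Set Implicit Arguments. Unset Strict Implicit. Unset Printing Implicit Defensive.

Ltac mx_expand := repeat progress (
  rewrite ?(mulmxDl, mulmxDr, mulmxBl, mulmxBr, mulNmx, mulmxN, mul1mx, mulmx1,
            mulmxA, mul0mx, mulmx0);
  rewrite -?(scalemxAl, scalemxAr)).
(* Entries of sums, opposites and scalings only: matrix products stay atoms for
   [ring]. *)
Ltac mx_entries :=
  do ![rewrite [fun_of_matrix (_ + _) _ _]mxE | rewrite [fun_of_matrix (- _) _ _]mxE
      | rewrite [fun_of_matrix (_ *: _) _ _]mxE | rewrite [fun_of_matrix 0 _ _]mxE].
Ltac mx_entrywise := apply/matrixP => ? ?; mx_entries.
Ltac neq_simpl := repeat match goal with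
  | H : is_true (?x != ?y) |- context [?x == ?y] => rewrite (negbTE H)
  | H : is_true (?x != ?y) |- context [?y == ?x] => rewrite (eq_sym y x) (negbTE H)
  end; rewrite ?eqxx /=.
Ltac delta_simpl :=
  rewrite ?mul_delta_mx_cond -?mulmxA ?mul_delta_mx_cond ?mulmxA;
  neq_simpl; rewrite ?mulr1n ?mulr0n; mx_expand.

Definition lie_bracket (R : pzRingType) (k : nat) (X Y : 'M[R]_k) : 'M[R]_k :=
  X *m Y - Y *m X.
Definition skew_delta (R : pzRingType) (k : nat) (i j : 'I_k) : 'M[R]_k :=
  delta_mx j i - delta_mx i j.
Definition plane_proj (R : pzRingType) (k : nat) (i j : 'I_k) : 'M[R]_k :=
  delta_mx i i + delta_mx j j.
Definition plane_rot (R : pzRingType) (k : nat) (i j : 'I_k) (c s : R) : 'M[R]_k :=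
  1%:M + s *: skew_delta R i j + (c - 1) *: plane_proj R i j.
Arguments lie_bracket : simpl never.
Arguments skew_delta : simpl never.
Arguments plane_proj : simpl never.
Arguments plane_rot : simpl never.

Lemma exists_ord_neq2 (k : nat) (a b : 'I_k) :
  (3 <= k)%N -> exists c : 'I_k, c != a /\ c != b.
Proof.
move=> k3; have : (0 < #|~: [set a; b]|)%N.
  by have := cardsC [set a; b]; rewrite card_ord cards2; case: (a != b) => /=; lia.
by case/card_gt0P => c; rewrite !inE negb_or => /andP[ca cb]; exists c.
Qed.

Section MatrixUnits.
Variables (R : pzRingType) (k : nat).
Implicit Types (A : 'M[R]_k) (a b c d x y : 'I_k).

Lemma mul_delta_mxE a b A x y : (delta_mx a b *m A) x y = (x == a)%:R * A b y.
Proof.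
rewrite mxE (bigD1 b) //= !mxE eqxx andbT big1 ?addr0 // => l /negbTE lb.
by rewrite mxE lb andbF mul0r.
Qed.

Lemma mulmx_deltaE A a b x y : (A *m delta_mx a b) x y = A x a * (y == b)%:R.
Proof.
rewrite mxE (bigD1 a) //= !mxE eqxx big1 ?addr0 // => l /negbTE la.
by rewrite mxE la mulr0.
Qed.

Lemma mul_delta_mx_conj a b A c d :
  delta_mx a b *m A *m delta_mx c d = A b c *: delta_mx a d.
Proof.
apply/matrixP => x y; rewrite mulmx_deltaE mul_delta_mxE !mxE.
by case: (x == a); case: (y == d); rewrite ?mulr0 ?mul0r ?mulr1 ?mul1r.
Qed.

End MatrixUnits.

Lemma is_scalar_mx_of_entries (V : nmodType) (k : nat) (A : 'M[V]_k) :
  (forall a b, a != b -> A a b = 0 /\ A a a = A b b) -> is_scalar_mx A.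
Proof.
move=> hA; rewrite /is_scalar_mx; case: insubP => // i0 _ _.
apply/eqP/matrixP => a b; rewrite mxE; case: eqVneq => [<-|ab].
  by rewrite mulr1n; case: (eqVneq a i0) => [->|ai] //; case: (hA a i0 ai).
by rewrite mulr0n; case: (hA a b ab).
Qed.

Lemma nonscalar_mx_entry (V : nmodType) (k : nat) (A : 'M[V]_k) :
  ~~ is_scalar_mx A -> exists a b, a != b /\ (A a b != 0 \/ A a a != A b b).
Proof.
move=> /negP nsA; apply: contrapT => nex; apply/nsA/is_scalar_mx_of_entries => a b ab.
split; apply/eqP/negPn/negP => hab; apply: nex; exists a, b.
- by split; [|left].
- by split; [|right].
Qed.

Section SkewDelta.
Variables (R : comPzRingType) (k : nat).
Implicit Types (A : 'M[R]_k) (a b i j p q r s : 'I_k).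

Lemma skew_deltaT i j : (skew_delta R i j)^T = - skew_delta R i j.
Proof. by rewrite /skew_delta linearB /= !trmx_delta opprB. Qed.

Lemma mxtrace_skew_delta i j : \tr (skew_delta R i j) = 0.
Proof. by rewrite /skew_delta linearB /= -{1}trmx_delta mxtrace_tr subrr. Qed.

Lemma lie_skew_delta_entry i j A :
  i != j -> (lie_bracket (skew_delta R i j) A) i j = A i i - A j j.
Proof.
move=> ij; rewrite /lie_bracket /skew_delta mulmxBl mulmxBr; mx_entries.
by rewrite !mulmx_deltaE !mul_delta_mxE; neq_simpl; ring.
Qed.

Lemma lie_skew_delta_row p q r : p != q -> r != p -> r != q ->
  lie_bracket (skew_delta R r p) (delta_mx p q) = - delta_mx r q.
Proof.
by move=> pq rp rq; rewrite /lie_bracket /skew_delta; mx_expand; delta_simpl;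
  mx_entrywise; ring.
Qed.

Lemma lie_skew_delta_col p q s : p != q -> s != p -> s != q ->
  lie_bracket (skew_delta R q s) (delta_mx p q) = delta_mx p s.
Proof.
by move=> pq sp sq; rewrite /lie_bracket /skew_delta; mx_expand; delta_simpl;
  mx_entrywise; ring.
Qed.

Lemma lie_delta_mx_swap a b : a != b ->
  lie_bracket (delta_mx a b) (delta_mx b a) = delta_mx a a - delta_mx b b :> 'M[R]_k.
Proof. by move=> ab; rewrite /lie_bracket; delta_simpl. Qed.

Lemma lie_delta_mx_twice a b A : a != b ->
  lie_bracket (delta_mx a b) (lie_bracket (delta_mx a b) A) = (-2 * A b a) *: delta_mx a b.
Proof.
move=> ab; rewrite /lie_bracket; mx_expand; delta_simpl.
by rewrite !mul_delta_mx_conj; mx_entrywise; ring.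
Qed.

Lemma delta_mx_offdiag_closure (V : 'M[R]_k -> Prop) p q : (3 <= k)%N ->
    (forall a b X, a != b -> V X -> V (lie_bracket (skew_delta R a b) X)) ->
    (forall (c : R) X, V X -> V (c *: X)) ->
    p != q -> V (delta_mx p q) -> forall a b, a != b -> V (delta_mx a b).
Proof.
move=> k3 VJ VZ pq Vpq.
have row a b r : a != b -> r != b -> V (delta_mx a b) -> V (delta_mx r b).
  move=> ab rb Vab; case: (eqVneq r a) => [-> // | ra].
  by rewrite -[delta_mx r b]opprK -scaleN1r -(lie_skew_delta_row ab ra rb); auto.
have col a b s : a != b -> s != a -> V (delta_mx a b) -> V (delta_mx a s).
  move=> ab sa Vab; case: (eqVneq s b) => [-> // | sb].
  by rewrite -(lie_skew_delta_col ab sa sb); apply: VJ; rewrite // eq_sym.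
move=> a b ab; have [r [rq rb]] := exists_ord_neq2 q b k3.
apply: (row r) => //; apply: (col r q) => //; first by rewrite eq_sym.
exact: (row p).
Qed.

End SkewDelta.

Section PlaneRotation.
Variables (R : comPzRingType) (k : nat) (i j : 'I_k).
Hypothesis ij : i != j.
Local Notation J := (skew_delta R i j).
Local Notation P := (plane_proj R i j).
Local Notation rot := (plane_rot i j).
Implicit Types (A Y : 'M[R]_k) (c s x y : R).

Lemma plane_projT : P^T = P.
Proof. by rewrite /plane_proj linearD /= !trmx_delta. Qed.

Lemma skew_delta_sqr : J *m J = - P.
Proof. by rewrite /skew_delta /plane_proj; mx_expand; delta_simpl; mx_entrywise; ring. Qed.

Lemma skew_delta_proj : J *m P = J.
Proof. by rewrite /skew_delta /plane_proj; mx_expand; delta_simpl; mx_entrywise; ring. Qed.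

Lemma proj_skew_delta : P *m J = J.
Proof. by rewrite /skew_delta /plane_proj; mx_expand; delta_simpl; mx_entrywise; ring. Qed.

Lemma plane_proj_idem : P *m P = P.
Proof. by rewrite /plane_proj; mx_expand; delta_simpl; mx_entrywise; ring. Qed.

Lemma plane_rotT c s : (rot c s)^T = rot c (- s).
Proof.
rewrite /plane_rot; move: (skew_deltaT R i j) plane_projT.
move: (skew_delta R i j) P => X Z XT ZT.
by rewrite !linearD !linearZ /= trmx1 XT ZT; mx_entrywise; ring.
Qed.

Lemma plane_rotM c s c' s' :
  rot c s *m rot c' s' = rot (c * c' - s * s') (c * s' + s * c').
Proof.
(* Generalizing [J] and [P] stops [mx_expand] from unfolding them. *)
rewrite /plane_rot; move: skew_delta_sqr skew_delta_proj proj_skew_delta plane_proj_idem.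
move: (skew_delta R i j) P => X Z XX XZ ZX ZZ.
by mx_expand; rewrite XX XZ ZX ZZ; mx_expand; mx_entrywise; ring.
Qed.

Lemma plane_rot_orthogonal c s : c ^+ 2 + s ^+ 2 = 1 -> rot c s *m (rot c s)^T = 1%:M.
Proof.
move=> cs1; rewrite plane_rotT plane_rotM.
have -> : c * c - s * - s = 1 by rewrite -cs1; ring.
have -> : c * - s + s * c = 0 by ring.
by rewrite /plane_rot subrr !scale0r !addr0.
Qed.

Lemma plane_rot_sqr c s : rot c s *m rot c s = rot (c ^+ 2 - s ^+ 2) (2 * c * s).
Proof. by rewrite plane_rotM; congr plane_rot; ring. Qed.

Lemma lie_skew_delta_proj A : lie_bracket J (P *m A *m P) = J *m A *m P - P *m A *m J.
Proof.
rewrite /lie_bracket !mulmxA skew_delta_proj -[P *m A *m P *m J]mulmxA.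
by rewrite proj_skew_delta.
Qed.

Lemma plane_rot_conjB c s A :
  rot c s *m A *m (rot c s)^T - (rot c s)^T *m A *m rot c s =
  (2 * s) *: (lie_bracket J A + (c - 1) *: lie_bracket J (P *m A *m P)).
Proof.
rewrite plane_rotT lie_skew_delta_proj /plane_rot /lie_bracket.
by move: (skew_delta R i j) P => X Z; mx_expand; mx_entrywise; ring.
Qed.

Lemma lie_skew_delta_half_turn Y :
  lie_bracket J (Y + rot (-1) 0 *m Y *m (rot (-1) 0)^T) =
  2 *: lie_bracket J (P *m Y *m P).
Proof.
rewrite plane_rotT oppr0 lie_skew_delta_proj /plane_rot /lie_bracket scale0r addr0.
move: skew_delta_proj proj_skew_delta plane_proj_idem.
move: (skew_delta R i j) P => X Z XZ ZX ZZ.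
mx_expand; rewrite ?XZ -?mulmxA ?ZX ?ZZ.
by mx_expand; mx_entrywise; ring.
Qed.

Lemma lie_skew_delta_projE Y :
  lie_bracket J (P *m Y *m P) =
  (Y i i - Y j j) *: (delta_mx i j + delta_mx j i) +
  (Y i j + Y j i) *: (delta_mx j j - delta_mx i i).
Proof.
rewrite lie_skew_delta_proj /skew_delta /plane_proj; mx_expand.
by rewrite !mul_delta_mx_conj; mx_entrywise; ring.
Qed.

Lemma lie_skew_delta_sym_plane x y :
  lie_bracket J (y *: (delta_mx i j + delta_mx j i) + x *: (delta_mx j j - delta_mx i i)) =
  2 *: (y *: (delta_mx j j - delta_mx i i) - x *: (delta_mx i j + delta_mx j i)).
Proof.
by rewrite /lie_bracket /skew_delta; mx_expand; delta_simpl; mx_entrywise; ring.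
Qed.

End PlaneRotation.

Section SpecialOrthogonal.
Variables (R : realType) (k : nat).
Implicit Types (Q : 'M[R]_k) (c s : R).

Lemma SOmx_unit Q : SOmx Q -> Q \in unitmx.
Proof. by case=> _ detQ; rewrite unitmxE detQ unitr1. Qed.

Lemma SOmx_inv Q : SOmx Q -> invmx Q = Q^T.
Proof.
move=> SQ; have [QQT _] := SQ.
by rewrite -[Q^T]mul1mx -(mulVmx (SOmx_unit SQ)) -mulmxA QQT mulmx1.
Qed.

Lemma SOmx_tr Q : SOmx Q -> SOmx Q^T.
Proof. by case=> QQT detQ; split; rewrite ?det_tr // trmxK; apply: mulmx1C. Qed.

Lemma plane_rot_sqr_SO (i j : 'I_k) c s : i != j -> c ^+ 2 + s ^+ 2 = 1 ->
  SOmx (plane_rot i j (c ^+ 2 - s ^+ 2) (2 * c * s)).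
Proof.
move=> ij cs1; have QQT := plane_rot_orthogonal ij cs1.
rewrite -(plane_rot_sqr ij); set Q := plane_rot i j c s in QQT *; split.
  by rewrite trmx_mul mulmxA -[Q *m Q *m Q^T]mulmxA QQT mulmx1 QQT.
(* det (Q Q) = det (Q Q^T) = 1, without computing the determinant of Q. *)
by have := congr1 determinant QQT; rewrite !det_mulmx det_tr det1.
Qed.

Lemma plane_rot_half_turn_SO (i j : 'I_k) : i != j -> SOmx (plane_rot i j (-1 : R) 0).
Proof.
move=> ij; have := plane_rot_sqr_SO (c := 0) (s := 1) ij.
by rewrite expr0n expr1n sub0r mulr0 mul0r add0r; apply.
Qed.

End SpecialOrthogonal.

Definition ad_invariant (F : fieldType) (k : nat) (E : {vspace 'M[F]_k}) (X : 'M[F]_k) : Prop :=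
  forall A, A \in E -> lie_bracket X A \in E.

Lemma memv_of_pencil (F : fieldType) (vT : vectType F) (U : {vspace vT})
    (u v : vT) (a b : F) :
  a != b -> u + a *: v \in U -> u + b *: v \in U -> u \in U.
Proof.
move=> ab ua ub.
have uE : b *: (u + a *: v) - a *: (u + b *: v) = (b - a) *: u.
  by rewrite !scalerDr !scalerA mulrC opprD addrACA subrr addr0 scalerBl.
have ba : b - a != 0 by rewrite subr_eq0 eq_sym.
by rewrite -[u](scalerK ba) -uE memvZ // memvB // memvZ.
Qed.

Section AdInvariant.
Variables (F : fieldType) (k : nat) (E : {vspace 'M[F]_k}).
Implicit Types (X Y : 'M[F]_k).

Lemma ad_invariantD X Y : ad_invariant E X -> ad_invariant E Y -> ad_invariant E (X + Y).
Proof.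
move=> LX LY A AE; have -> : lie_bracket (X + Y) A = lie_bracket X A + lie_bracket Y A.
  by rewrite /lie_bracket mulmxDl mulmxDr opprD addrACA.
by rewrite memvD ?LX ?LY.
Qed.

Lemma ad_invariantZ (c : F) X : ad_invariant E X -> ad_invariant E (c *: X).
Proof.
move=> LX A AE; have -> : lie_bracket (c *: X) A = c *: lie_bracket X A.
  by rewrite /lie_bracket scalerBr scalemxAl scalemxAr.
by rewrite memvZ ?LX.
Qed.

Lemma ad_invariant_lie X Y :
  ad_invariant E X -> ad_invariant E Y -> ad_invariant E (lie_bracket X Y).
Proof.
move=> LX LY A AE.
have -> : lie_bracket (lie_bracket X Y) A =
          lie_bracket X (lie_bracket Y A) - lie_bracket Y (lie_bracket X A).
  by rewrite /lie_bracket; mx_expand; mx_entrywise; ring.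
by apply: memvB; [apply/LX/LY | apply/LY/LX].
Qed.

Lemma ad_invariant_conj h X : h \in unitmx ->
    (forall A, A \in E -> h *m A *m invmx h \in E) ->
    (forall A, A \in E -> invmx h *m A *m h \in E) ->
  ad_invariant E X -> ad_invariant E (h *m X *m invmx h).
Proof.
move=> hu hE hVE LX A AE.
have -> : lie_bracket (h *m X *m invmx h) A =
          h *m lie_bracket X (invmx h *m A *m h) *m invmx h.
  by rewrite /lie_bracket; mx_expand; rewrite !(mulmxK hu) mulmxV // mul1mx.
exact/hE/LX/hVE.
Qed.

End AdInvariant.

Section SOInvariant.
Variables (R : realType) (k : nat) (E : {vspace 'M[R]_k}).
Hypothesis SOE : conj_preserves (@SOmx R k) E.
Implicit Types (Q A X Y : 'M[R]_k) (i j p q : 'I_k).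

Lemma SOmx_conj_mem Q A : SOmx Q -> A \in E ->
  Q *m A *m Q^T \in E /\ Q^T *m A *m Q \in E.
Proof.
move=> SQ AE; split; first by rewrite -SOmx_inv //; apply: SOE.
by have := SOE (SOmx_tr SQ) AE; rewrite (SOmx_inv (SOmx_tr SQ)) trmxK.
Qed.

Lemma ad_invariant_SO_conj Q X : SOmx Q -> ad_invariant E X ->
  ad_invariant E (Q *m X *m Q^T).
Proof.
move=> SQ; rewrite -SOmx_inv //.
by apply: ad_invariant_conj (SOmx_unit SQ) _ _ => A AE;
  rewrite SOmx_inv //; case: (SOmx_conj_mem SQ AE).
Qed.

(* Two rotations with sine 24/25 and cosines -7/25 and 7/25 separate
   [lie_bracket J A] from [lie_bracket J (P A P)]; being squares of rotations
   with rational entries, they lie in SO(k) with no square root needed. *)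
Lemma ad_invariant_skew_delta i j : ad_invariant E (skew_delta R i j).
Proof.
move=> A AE; case: (eqVneq i j) => [<-|ij].
  by rewrite /skew_delta subrr /lie_bracket mul0mx mulmx0 subrr mem0v.
have pencil c s : c ^+ 2 + s ^+ 2 = 1 -> c != 0 -> s != 0 ->
    lie_bracket (skew_delta R i j) A + (c ^+ 2 - s ^+ 2 - 1) *:
      lie_bracket (skew_delta R i j) (plane_proj R i j *m A *m plane_proj R i j) \in E.
  move=> cs1 c0 s0; have [QAQT QTAQ] := SOmx_conj_mem (plane_rot_sqr_SO ij cs1) AE.
  have := memvB QAQT QTAQ; rewrite plane_rot_conjB // => /(memvZ (2 * (2 * c * s))^-1).
  have cs0 : 2 * (2 * c * s) != 0 by rewrite !mulf_neq0 // pnatr_eq0.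
  by rewrite scalerA mulVf ?scale1r.
apply: (memv_of_pencil _ (pencil (3/5) (4/5) _ _ _) (pencil (4/5) (3/5) _ _ _)).
all: first [lra | apply/eqP; lra].
Qed.

(* With D the half-turn in the plane (p, q), Y + D Y D^T is twice
   (1 - P) Y (1 - P) + P Y P, and [J] commutes with the first block: one bracket
   with [J] leaves [lie_bracket J (P Y P)], a nonzero combination of the
   symmetric traceless matrices U and W of the plane; a second bracket rotates
   it, the two span U and W, and 2 e_pq = U - J. *)
Lemma ad_invariant_delta_of_nonskew p q Y : p != q -> ad_invariant E Y ->
  Y p q + Y q p != 0 \/ Y p p != Y q q -> ad_invariant E (delta_mx p q).
Proof.
move=> pq LY nonskew.
pose x := Y p q + Y q p; pose y := Y p p - Y q q.
pose U : 'M[R]_k := delta_mx p q + delta_mx q p.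
pose W : 'M[R]_k := delta_mx q q - delta_mx p p.
have LJ := ad_invariant_skew_delta p q.
have L1 : ad_invariant E (y *: U + x *: W).
  have LD := ad_invariant_SO_conj (plane_rot_half_turn_SO R pq) LY.
  have := ad_invariantZ 2^-1 (ad_invariant_lie LJ (ad_invariantD LY LD)).
  by rewrite lie_skew_delta_half_turn // lie_skew_delta_projE // scalerA mulVf ?scale1r ?pnatr_eq0.
have L2 : ad_invariant E (y *: W - x *: U).
  have := ad_invariantZ 2^-1 (ad_invariant_lie LJ L1).
  by rewrite lie_skew_delta_sym_plane // scalerA mulVf ?scale1r ?pnatr_eq0.
have nz : x ^+ 2 + y ^+ 2 != 0.
  rewrite paddr_eq0 ?sqr_ge0 // !sqrf_eq0 negb_and.
  by case: nonskew => [->|]; rewrite ?subr_eq0 => // ->; rewrite orbT.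
have -> : delta_mx p q = (y / (2 * (x ^+ 2 + y ^+ 2))) *: (y *: U + x *: W) +
    (- x / (2 * (x ^+ 2 + y ^+ 2))) *: (y *: W - x *: U) + (- 2^-1) *: skew_delta R p q.
  by rewrite /U /W /skew_delta; mx_entrywise; field.
by apply: ad_invariantD; [apply: ad_invariantD|]; apply: ad_invariantZ.
Qed.

End SOInvariant.

Section SlInvariantSubspace.
Variables (F : numFieldType) (k : nat) (E : {vspace 'M[F]_k}).

Lemma exists_nonscalar_memv : (1 < \dim E)%N -> exists2 A, A \in E & ~~ is_scalar_mx A.
Proof.
move=> dimE; apply: contrapT => nex.
have : (E <= <[1%:M : 'M[F]_k]>)%VS.
  apply/subvP => A AE; have /is_scalar_mxP[c ->] : is_scalar_mx A.
    by apply/negPn/negP => nsA; apply: nex; exists A.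
  by rewrite -[c%:M]scalemx1 memvZ ?memv_line.
by move/dimvS; rewrite dim_vline leqNgt (leq_ltn_trans (leq_b1 _) dimE).
Qed.

Lemma delta_mx_mem_of_entry (i j : 'I_k) (C : 'M[F]_k) : i != j ->
  ad_invariant E (delta_mx i j) -> C \in E -> C j i != 0 -> delta_mx i j \in E.
Proof.
move=> ij Lij CE Cji; have := Lij _ (Lij _ CE); rewrite lie_delta_mx_twice //.
move/(memvZ (-2 * C j i)^-1); rewrite scalerA mulVf ?scale1r //.
by rewrite mulf_neq0 // oppr_eq0 pnatr_eq0.
Qed.

Lemma dim_ge_of_delta_mem :
    (forall a b : 'I_k, a != b -> delta_mx a b \in E) ->
    (forall a b : 'I_k, delta_mx a a - delta_mx b b \in E) ->
  (k ^ 2 - 1 <= \dim E)%N.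
Proof.
move=> Eoff Ediag.
have full : (fullv <= E + <[1%:M : 'M[F]_k]>)%VS.
  apply/subvP => X _; rewrite [X]matrix_sum_delta.
  apply: memv_suml => a _; apply: memv_suml => b _; apply: memvZ.
  case: (eqVneq a b) => [<-|ab]; last exact/(subvP (addvSl _ _))/Eoff.
  have k0 : k%:R != 0 :> F by rewrite pnatr_eq0 -lt0n (leq_ltn_trans _ (ltn_ord a)).
  have -> : delta_mx a a = k%:R^-1 *: (\sum_b (delta_mx a a - delta_mx b b) + 1%:M) :> 'M[F]_k.
    rewrite big_split /= sumr_const card_ord sumrN -mx1_sum_delta subrK.
    by rewrite -[delta_mx a a *+ k]scaler_nat scalerA mulVf ?scale1r.
  by rewrite memvZ // memv_add ?memv_line // memv_suml.
have [dimEL _] := dimv_add_leqif E <[1%:M : 'M[F]_k]>.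
have dimM : dim 'M[F]_k = (k * k)%N by [].
move: (leq_trans (dimvS full) dimEL); rewrite dimvf dimM dim_vline -mulnn.
by case: (_ != 0) => /=; lia.
Qed.

Lemma dim_ad_invariant_delta : (3 <= k)%N ->
    (forall a b : 'I_k, a != b -> ad_invariant E (delta_mx a b)) ->
  (\dim E <= 1)%N \/ (k ^ 2 - 1 <= \dim E)%N.
Proof.
move=> k3 Ldelta; case: (leqP (\dim E) 1) => [|dimE]; [by left | right].
have LJ a b : a != b -> ad_invariant E (skew_delta F a b).
  move=> ab; rewrite /skew_delta -scaleN1r.
  by apply: ad_invariantD; [apply: Ldelta; rewrite eq_sym | apply/ad_invariantZ/Ldelta].
have [A AE /nonscalar_mx_entry[a [b [ab Aab]]]] := exists_nonscalar_memv dimE.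
have Eba : delta_mx b a \in E.
  have ba : b != a by rewrite eq_sym.
  case: Aab => [A_ab | A_diag]; first exact: delta_mx_mem_of_entry (Ldelta _ _ ba) AE A_ab.
  apply: delta_mx_mem_of_entry (Ldelta _ _ ba) (LJ _ _ ab _ AE) _ => //.
  by rewrite lie_skew_delta_entry // subr_eq0.
have Edelta : forall a b : 'I_k, a != b -> delta_mx a b \in E.
  apply: (delta_mx_offdiag_closure (V := fun X => X \in E) k3 _ _ _ Eba).
  - by move=> c d X cd; apply: LJ.
  - by move=> c X; apply: memvZ.
  - by rewrite eq_sym.
apply: dim_ge_of_delta_mem => // c d; case: (eqVneq c d) => [->|cd].
  by rewrite subrr mem0v.
by rewrite -lie_delta_mx_swap //; apply/Ldelta/Edelta; rewrite // eq_sym.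
Qed.

End SlInvariantSubspace.

Lemma is_scalar_of_commute_skew (R : comPzRingType) (k : nat) (M : 'M[R]_k) :
    (3 <= k)%N -> (forall p q, M *m skew_delta R p q = skew_delta R p q *m M) ->
  is_scalar_mx M.
Proof.
move=> k3 Mcomm; apply: is_scalar_mx_of_entries => a b ab.
have entry p q x y : (M *m skew_delta R p q) x y = (skew_delta R p q *m M) x y.
  by rewrite Mcomm.
have [c [ca cb]] := exists_ord_neq2 a b k3.
split; [move: (entry c b a c) | move: (entry a b a b)];
  rewrite /skew_delta mulmxBl mulmxBr; mx_entries;
  rewrite !mulmx_deltaE !mul_delta_mxE; neq_simpl;
  rewrite ?mulr1 ?mulr0 ?mul1r ?mul0r ?subr0 ?sub0r //; exact: oppr_inj.
Qed.

Lemma skew_of_entries (F : numFieldType) (k : nat) (Y : 'M[F]_k) : \tr Y = 0 ->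
    (forall a b, a != b -> Y a b + Y b a = 0 /\ Y a a = Y b b) ->
  Y^T = - Y.
Proof.
move=> trY hY; have [c Sc] : exists c, Y + Y^T = c%:M.
  apply/is_scalar_mxP/is_scalar_mx_of_entries => a b ab; rewrite !mxE.
  by have [-> ->] := hY a b ab.
apply/matrixP => a b.
have c0 : c = 0.
  have /eqP : c *+ k = 0 by rewrite -mxtrace_scalar -Sc mxtraceD mxtrace_tr trY addr0.
  have /gtn_eqF k0 : (0 < k)%N by apply: leq_ltn_trans (ltn_ord a).
  by rewrite mulrn_eq0 k0 => /eqP.
have /matrixP/(_ b a) := Sc; rewrite c0 !mxE mul0rn => /eqP.
by rewrite addr_eq0 => /eqP.
Qed.

Lemma COmx_of_trmx_mul_scalar (R : realType) (k : nat) (h : 'M[R]_k) (c : R) :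
  (0 < k)%N -> h \in unitmx -> h^T *m h = c%:M -> COmx h.
Proof.
move=> k0 hu hTh; exists c; last first.
  have hT : h^T = c *: invmx h.
    by rewrite -[h^T]mulmx1 -(mulmxV hu) mulmxA hTh mul_scalar_mx.
  by rewrite hT -scalemxAr mulmxV // scalemx1.
pose i0 := Ordinal k0; rewrite lt0r; apply/andP; split.
  apply: contraTneq hu => c0; rewrite unitmxE unitfE negbK.
  have := congr1 determinant hTh; rewrite det_mulmx det_tr det_scalar c0 expr0n.
  by rewrite gtn_eqF //= => /eqP; rewrite mulf_eq0 orbb.
have /matrixP/(_ i0 i0) := hTh; rewrite !mxE eqxx mulr1n => <-.
by apply: sumr_ge0 => l _; rewrite !mxE -expr2 sqr_ge0.
Qed.

Lemma COmx_of_conj_skew (R : realType) (k : nat) (h : 'M[R]_k) :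
    (3 <= k)%N -> h \in unitmx ->
    (forall p q, (h *m skew_delta R p q *m invmx h)^T = - (h *m skew_delta R p q *m invmx h)) ->
  COmx h.
Proof.
move=> k3 hu hJ; have hTu : h^T \in unitmx by rewrite unitmx_tr.
have comm p q : h^T *m h *m skew_delta R p q = skew_delta R p q *m (h^T *m h).
  move: (hJ p q); rewrite !trmx_mul trmx_inv skew_deltaT.
  move: (skew_delta R p q) => J /(congr1 (fun M => h^T *m M *m h)) /=; mx_expand.
  by rewrite mulmxV // mul1mx (mulmxKV hu) => /oppr_inj.
have /is_scalar_mxP[c hTh] := is_scalar_of_commute_skew k3 comm.
exact: COmx_of_trmx_mul_scalar (leq_trans _ k3) hu hTh.
Qed.

Unset Implicit Arguments.
Set Strict Implicit.

Theorem lemma5p3 (R : realType) (k : nat) (H : set 'M[R]_k)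
  (E : {vspace 'M[R]_k}) :
  (3 <= k)%N ->
  is_GL_subgroup H -> closed_in_GL H ->
  @SOmx R k `<=` H ->
  conj_preserves H E ->
  (1 < \dim E)%N -> (\dim E < k ^ 2 - 1)%N ->
  H `<=` @COmx R k.
Proof.
move=> k3 [_ H_unit _ H_inv] _ SO_H HE dimE_gt1 dimE_lt h Hh.
have SOE : conj_preserves (@SOmx R k) E := fun Q A SQ => HE Q A (SO_H Q SQ).
have hu := H_unit h Hh.
apply: (COmx_of_conj_skew k3 hu) => p q.
set Y := h *m _ *m _.
have LY : ad_invariant E Y.
  apply: (ad_invariant_conj hu (fun A => HE h A Hh)) (ad_invariant_skew_delta SOE p q).
  by move=> A /(HE _ A (H_inv h Hh)); rewrite invmxK.
apply: skew_of_entries => [|a b ab]; first by rewrite mxtrace_mulC mulKmx // mxtrace_skew_delta.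
apply: contrapT => /not_andP nonskew.
have {}nonskew : Y a b + Y b a != 0 \/ Y a a != Y b b.
  by case: nonskew => /eqP; [left | right].
have L_delta : forall c d, c != d -> ad_invariant E (delta_mx c d).
  apply: (delta_mx_offdiag_closure k3 _ _ ab (ad_invariant_delta_of_nonskew SOE ab LY nonskew)).
  - by move=> c d X _; apply: ad_invariant_lie (ad_invariant_skew_delta SOE c d).
  - by move=> c X; apply: ad_invariantZ.
case: (dim_ad_invariant_delta k3 L_delta) => dimE.
  by move: dimE_gt1; rewrite ltnNge dimE.
by move: dimE_lt; rewrite ltnNge dimE.
Qed.
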